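(* Let $t$ be a standard tableau with $n$ entries and let $2\le k\le n$ be such that $t\sigma_k$ is also standard and $r_t(k-1)\equiv r_t(k) \pmod p$, so that $[t\sigma_k]=[t]$. Put $T:=[t]$. Then $\sigma_k E_T = E_T\sigma_k$ in $RS_n$.
   Context: $p$ is a prime, $R$ is the localization of $\mathbb Z$ at the prime ideal $(p)$, and $\mathbb F_p=R/pR$. $S_n$ acts on the right on $\{1,\dots,n\}$ and hence on tableaux (a permutation $\sigma$ replaces each entry $i$ by $i\sigma$); products of permutations are read from left to right. For $2\le k\le n$ put $\sigma_k=(k-1,k)$. The Jucys–Murphy elements are $L_1=0$ and $L_k=\sum_{j=1}^{k-1}(j,k)\in\mathbb ZS_n$. Partitions are drawn as Young diagrams in English convention; the node $[i,j]$ lies in row $i$, column $j$. A $\lambda$-tableau is a bijective filling of the nodes of $\lambda$ with $1,\dots,n$; it is standard if entries increase along rows and down columns. The content is $r_t(k)=j-i$ if $k$ occupies node $[i,j]$ of $t$. For a tableau $t$ the Jucys–Murphy idempotent is $E_t:=\prod_{c=-n+1}^{n-1}\prod_{i:\,r_t(i)\neq c}\frac{L_i-c}{r_t(i)-c}\in\mathbb QS_n$; over standard tableaux of all shapes of size $n$ these are pairwise orthogonal idempotents with sum $1$, and $L_kE_t=r_t(k)E_t$. Two standard tableaux $s,t$ with $n$ entries (possibly of different shapes) satisfy $s\sim_p t$ if $r_s(k)\equiv r_t(k)\pmod p$ for all $k$; a tableau class is an equivalence class of standard tableaux for $\sim_p$, and $[t]$ denotes the class of $t$. For a class $T$, $E_T:=\sum_{t\in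 T}E_t$; it is known (Murphy) that $E_T\in RS_n$. *)

From HB Require Import structures.
From mathcomp Require Import all_boot all_order all_algebra all_fingroup.
Set Implicit Arguments. Unset Strict Implicit. Unset Printing Implicit Defensive.
Import Order.TTheory GRing.Theory Num.Theory.
Local Open Scope ring_scope.

(* Conventions: the points {1,...,n} are represented by 'I_n = {0,...,n-1}
   (point m+1 of the paper is the ordinal m).  Permutations 'S_n multiply
   left to right in mathcomp ((s * t) x = t (s x)), as in the paper. *)

Definition galg (n : nat) := {ffun 'S_n -> rat}.

Definition gbasis n (g : 'S_n) : galg n := [ffun h => (h == g)%:R].
Definition gone n : galg n := gbasis 1%g.
Definition gscale n (a : rat) (x : galg n) : galg n := [ffun g => a * x g].
(* convolution product: (sum a_h h)(sum b_k k) = sum a_h b_k (h k) *)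
Definition gmul n (x y : galg n) : galg n :=
  [ffun g => \sum_(h : 'S_n) x h * y (h^-1 * g)%g].
Definition gprod n (s : seq (galg n)) : galg n := foldr (@gmul n) (gone n) s.

Definition JM n (k : 'I_n) : galg n :=
  \sum_(j : 'I_n | (j < k)%N) gbasis (tperm j k).

(* A tableau with n entries: entry x is placed at node t x = (row, column),
   0-based.  Any Young diagram with n nodes fits into 'I_n * 'I_n. *)
Definition tab (n : nat) := {ffun 'I_n -> 'I_n * 'I_n}.
Definition trow n (t : tab n) (x : 'I_n) : nat := val (t x).1.
Definition tcol n (t : tab n) (x : 'I_n) : nat := val (t x).2.

(* t is a bijective filling of the nodes of a Young diagram (of a partition) *)
Definition is_tableau n (t : tab n) : bool :=
  injectiveb t &&
  [forall x, forall i : 'I_n, forall j : 'I_n,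
     ((i <= trow t x)%N && (j <= tcol t x)%N) ==> [exists y, t y == (i, j)]].

Definition standard n (t : tab n) : bool :=
  is_tableau t &&
  [forall x, forall y,
     ((trow t x == trow t y) && (tcol t y == (tcol t x).+1) ==> (x < y)%N) &&
     ((tcol t x == tcol t y) && (trow t y == (trow t x).+1) ==> (x < y)%N)].

(* right action of S_n: entry i is replaced by i sigma *)
Definition tact n (t : tab n) (s : 'S_n) : tab n := [ffun i => t ((s^-1)%g i)].

Definition content n (t : tab n) (x : 'I_n) : int :=
  (tcol t x)%:Z - (trow t x)%:Z.

Definition psim (p : nat) n (s t : tab n) : bool :=
  [forall x, (content s x == content t x %[mod p%:Z])%Z].

(* E_t = prod_{c=-n+1}^{n-1} prod_{i : r_t(i) <> c} (L_i - c)/(r_t(i) - c) *)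
Definition contents_range (n : nat) : seq int :=
  [seq (m%:Z - (n%:Z - 1)) | m <- iota 0 (n + n).-1].

Definition JMidem n (t : tab n) : galg n :=
  gprod (flatten [seq [seq gscale ((content t i - c)%:~R)^-1
                             (JM i - gscale (c%:~R) (gone n))
                       | i <- enum 'I_n & content t i != c]
                 | c <- contents_range n]).

Definition JMclass (p : nat) n (t : tab n) : galg n :=
  \sum_(s : tab n | standard s && psim p s t) JMidem s.

From HB Require Import structures.
From mathcomp Require Import all_boot all_order all_algebra all_fingroup.
From mathcomp Require Import zify.
Set Implicit Arguments. Unset Strict Implicit. Unset Printing Implicit Defensive.
Import GRing.Theory Num.Theory.
Local Open Scope ring_scope.

(* Let sigma = tperm a b with b = a + 1 (the paper's sigma_k, k = b + 1) and
   T = [t].  The identity sigma E_T = E_T sigma is proved in Q S_n; it does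
   not need that E_T has coefficients in R.
   1. (gmul, gone) makes galg n a ring.  The Jucys-Murphy elements commute,
      sigma commutes with L_j for j <> a, b, and L_b = sigma L_a sigma + sigma;
      hence sigma commutes with L_a + L_b and with L_a L_b.
   2. In any ring, if x and y commute and s commutes with x + y and x y, then
      s commutes with f(x) g(y) + g(x) f(y) for all polynomials f, g.
   3. E_s = M_s * e_{r_s(a)}(L_a) * e_{r_s(b)}(L_b), where M_s only involves
      the L_j with j <> a, b and does not change when s is replaced by
      s sigma, which swaps r_s(a) and r_s(b).  By 1 and 2, sigma commutes
      with E_s + E_(s sigma).
   4. Since r_t(a) = r_t(b) mod p and p >= 2, the map s |-> s sigma is an
      involution of the class T.  So 2 E_T = sum_(s in T) (E_s + E_(s sigma))
      commutes with sigma, and one divides by 2 in Q S_n. *)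

Section GroupAlgebraRing.
Variable n : nat.
Implicit Types x y z : galg n.

Lemma gmulA : associative (@gmul n).
Proof.
move=> x y z; apply/ffunP=> g; rewrite !ffunE.
under eq_bigr do rewrite ffunE mulr_sumr.
under [RHS]eq_bigr do rewrite ffunE mulr_suml.
rewrite [RHS]exchange_big /=; apply: eq_bigr => k _.
rewrite [RHS](reindex_inj (mulgI k)) /=; apply: eq_bigr => m _.
by rewrite mulKg invMg mulgA mulrA.
Qed.

Lemma gmul1 : left_id (gone n) (@gmul n).
Proof.
move=> x; apply/ffunP=> g; rewrite ffunE (bigD1 1%g) //= big1 => [|h /negbTE h1].
  by rewrite !ffunE eqxx mul1r invg1 mul1g addr0.
by rewrite !ffunE h1 mul0r.
Qed.

Lemma gmulr1 : right_id (gone n) (@gmul n).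
Proof.
move=> x; apply/ffunP=> g; rewrite ffunE (bigD1 g) //= big1 => [|h /negbTE hg].
  by rewrite !ffunE mulVg eqxx mulr1 addr0.
rewrite !ffunE; case: eqP => [/eqP|]; last by rewrite mulr0.
by rewrite -eq_mulVg1 hg.
Qed.

Lemma gmulDl : left_distributive (@gmul n) +%R.
Proof.
move=> x y z; apply/ffunP=> g; rewrite !ffunE -big_split /=.
by apply: eq_bigr => h _; rewrite ffunE mulrDl.
Qed.

Lemma gmulDr : right_distributive (@gmul n) +%R.
Proof.
move=> x y z; apply/ffunP=> g; rewrite !ffunE -big_split /=.
by apply: eq_bigr => h _; rewrite ffunE mulrDr.
Qed.

Lemma gone_neq0 : gone n != 0.
Proof.
by apply/eqP => /ffunP /(_ 1%g); rewrite !ffunE eqxx => /eqP; rewrite oner_eq0.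
Qed.

End GroupAlgebraRing.

Definition QS n : Type := galg n.
HB.instance Definition _ n := GRing.Zmodule.on (QS n).
HB.instance Definition _ n := GRing.Zmodule_isNzRing.Build (QS n)
  (@gmulA n) (@gmul1 n) (@gmulr1 n) (@gmulDl n) (@gmulDr n) (@gone_neq0 n).

Section GroupAlgebraElements.
Variable n : nat.
Local Notation R := (QS n).

Lemma gbasisM (g h : 'S_n) : (gbasis g : R) * gbasis h = gbasis (g * h)%g.
Proof.
apply/ffunP=> k; rewrite !ffunE /= (bigD1 g) //= big1 => [|m /negbTE mg].
  rewrite !ffunE eqxx mul1r addr0; congr (_%:R).
  case: eqP => [<-|ne]; first by rewrite mulKVg eqxx.
  by case: eqP => // e; case: ne; rewrite e mulKg.
by rewrite !ffunE mg mul0r.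
Qed.

Lemma gscale_mull a (x y : R) : (gscale a x : R) * y = gscale a (x * y).
Proof.
apply/ffunP=> g; rewrite !ffunE mulr_sumr.
by apply: eq_bigr => h _; rewrite ffunE mulrA.
Qed.

Lemma gscale_mulr a (x y : R) : x * (gscale a y : R) = gscale a (x * y).
Proof.
apply/ffunP=> g; rewrite !ffunE mulr_sumr.
by apply: eq_bigr => h _; rewrite ffunE mulrCA.
Qed.

Definition scalar (a : rat) : R := gscale a (gone n).

Lemma gscaleE a (x : R) : gscale a x = scalar a * x.
Proof. by rewrite /scalar gscale_mull mul1r. Qed.

Lemma scalar_central a (x : R) : GRing.comm (scalar a) x.
Proof. by rewrite /GRing.comm /scalar gscale_mull gscale_mulr mul1r mulr1. Qed.

Lemma scalar_is_zmod : zmod_morphism scalar.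
Proof. by move=> u v; apply/ffunP=> g; rewrite !ffunE mulrBl. Qed.

Lemma scalar_is_monoid : monoid_morphism scalar.
Proof.
split; first by apply/ffunP=> g; rewrite !ffunE mul1r.
by move=> u v; rewrite /scalar gscale_mull mul1r; apply/ffunP=> g; rewrite !ffunE mulrA.
Qed.

HB.instance Definition _ := GRing.isZmodMorphism.Build rat R scalar scalar_is_zmod.
HB.instance Definition _ := GRing.isMonoidMorphism.Build rat R scalar scalar_is_monoid.

(* Twice a group algebra element determines it (characteristic 0). *)
Lemma mulr2n_inj (x y : R) : x *+ 2 = y *+ 2 -> x = y.
Proof.
move=> /ffunP e; apply/ffunP => g; move: (e g); rewrite !ffunMnE => /eqP.
by rewrite -subr_eq0 -mulrnBl mulrn_eq0 /= subr_eq0 => /eqP.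
Qed.

End GroupAlgebraElements.

Section SymmetricCommutation.
Variable R : nzRingType.
Variables s x y : R.
Hypothesis cxy : GRing.comm x y.
Hypothesis s_sum : GRing.comm s (x + y).
Hypothesis s_prod : GRing.comm s (x * y).

Lemma power_sum_rec m : x ^+ m.+2 + y ^+ m.+2 =
  (x + y) * (x ^+ m.+1 + y ^+ m.+1) - (x * y) * (x ^+ m + y ^+ m).
Proof.
have e1 : x * y * x ^+ m = y * x ^+ m.+1 by rewrite cxy -mulrA -exprS.
have e2 : x * y * y ^+ m = x * y ^+ m.+1 by rewrite -mulrA -exprS.
rewrite !mulrDl !mulrDr e1 e2 -!exprS.
by rewrite [y * _ + y ^+ _]addrC addrACA [x * y ^+ _ + _]addrC addrK.
Qed.

Lemma comm_power_sum m : GRing.comm s (x ^+ m + y ^+ m).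
Proof.
suff [] : GRing.comm s (x ^+ m + y ^+ m) /\ GRing.comm s (x ^+ m.+1 + y ^+ m.+1) by [].
elim: m => [|m [IH1 IH2]].
  by rewrite !expr0 !expr1; split=> //; apply: commrD; apply: commr1.
by split=> //; rewrite power_sum_rec; apply: commrB; apply: commrM.
Qed.

(* x^i y^j + x^j y^i = (x y)^i (x^(j-i) + y^(j-i)) for i <= j. *)
Lemma comm_sym_monomial i j : GRing.comm s (x ^+ i * y ^+ j + x ^+ j * y ^+ i).
Proof.
wlog lij : i j / (i <= j)%N.
  by move=> H; case: (leqP i j) => [/H //|/ltnW /H]; rewrite addrC.
rewrite -(subnKC lij) !exprD; set d := (j - i)%N.
have cxd : GRing.comm (x ^+ d) (y ^+ i) by apply/commrX/commr_sym/commrX.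
rewrite -[x ^+ i * x ^+ d * _]mulrA cxd !mulrA -mulrDr addrC -exprMn_comm //.
by apply: commrM; [apply: commrX | apply: comm_power_sum].
Qed.

End SymmetricCommutation.

Section CentralEvaluation.
Variables (F : comNzRingType) (R : nzRingType) (phi : {rmorphism F -> R}).
Hypothesis phi_central : forall a (u : R), GRing.comm (phi a) u.

Lemma phi_commr (u : R) : commr_rmorph phi u.
Proof. by move=> a; apply/commr_sym/phi_central. Qed.

Definition peval (u : R) (f : {poly F}) : R := horner_morph (phi_commr u) f.

Lemma peval_expand (u : R) (f : {poly F}) N : (size f <= N)%N ->
  peval u f = \sum_(i < N) phi f`_i * u ^+ i.
Proof.
move=> hN; rewrite /peval /horner_morph.
rewrite (horner_coef_wide _ (leq_trans (size_poly _ _) hN)).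
by apply: eq_bigr => i _; rewrite coef_map.
Qed.

(* Step 2 of the proof: reduce to symmetric monomials. *)
Lemma peval_sym_comm (s x y : R) : GRing.comm x y ->
  GRing.comm s (x + y) -> GRing.comm s (x * y) ->
  forall f g, GRing.comm s (peval x f * peval y g + peval x g * peval y f).
Proof.
move=> cxy s_sum s_prod f g; set N := (size f + size g)%N.
have hf : (size f <= N)%N by apply: leq_addr.
have hg : (size g <= N)%N by apply: leq_addl.
have phiM a b (u v : R) : phi a * u * (phi b * v) = phi (a * b) * (u * v).
  by rewrite -mulrA [u * _]mulrA -(phi_central b u) -mulrA mulrA rmorphM.
rewrite !(peval_expand _ hf) !(peval_expand _ hg) !mulr_suml.
under eq_bigr do rewrite mulr_sumr.
under [X in _ + X]eq_bigr do rewrite mulr_sumr.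
rewrite [X in _ + X]exchange_big /= -big_split; apply: commr_sum => i _.
rewrite -big_split; apply: commr_sum => j _ /=.
rewrite !phiM [g`_j * _]mulrC -mulrDr; apply: commrM.
  exact/commr_sym/phi_central.
exact: comm_sym_monomial.
Qed.

Lemma peval_comm (z u : R) (f : {poly F}) : GRing.comm z u -> GRing.comm z (peval u f).
Proof.
move=> czu; rewrite (peval_expand _ (leqnn _)); apply: commr_sum => i _.
by apply: commrM; [apply/commr_sym/phi_central | apply: commrX].
Qed.

End CentralEvaluation.

Section CommutingProducts.
Variable R : nzRingType.

Lemma prod_split_comm (I : Type) (r : seq I) (u v : I -> R) :
  (forall i j, GRing.comm (u i) (v j)) ->
  \prod_(i <- r) (u i * v i) = \prod_(i <- r) u i * \prod_(i <- r) v i.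
Proof.
move=> cuv; elim: r => [|x r IH]; first by rewrite !big_nil mulr1.
rewrite !big_cons IH !mulrA; congr (_ * _); rewrite -!mulrA; congr (_ * _).
by apply: commr_prod => i _; apply/commr_sym/cuv.
Qed.

Lemma exchange_prod_comm (I J : Type) (rI : seq I) (rJ : seq J)
    (P : I -> J -> bool) (F : I -> J -> R) :
  (forall i j i' j', GRing.comm (F i j) (F i' j')) ->
  \prod_(i <- rI) \prod_(j <- rJ | P i j) F i j =
  \prod_(j <- rJ) \prod_(i <- rI | P i j) F i j.
Proof.
move=> cF; under eq_bigr do rewrite big_mkcond.
under [RHS]eq_bigr do rewrite big_mkcond.
set G := fun i j => if P i j then F i j else 1.
have cG i j i' j' : GRing.comm (G i j) (G i' j').
  rewrite /G; case: (P i j); case: (P i' j');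
  by [apply: cF | apply: commr1 | apply/commr_sym/commr1].
elim: rI => [|x r IH]; first by rewrite big_nil big1 // => j _; rewrite big_nil.
rewrite big_cons IH -prod_split_comm; first by apply: eq_bigr => j _; rewrite big_cons.
by move=> j j'; apply: commr_prod => i _; apply: cG.
Qed.

Lemma prod_pick (I : finType) (K : I -> R) (x : I) :
  \prod_(i <- enum I) (if i == x then K i else 1) = K x.
Proof.
rewrite -big_mkcond -big_filter.
have -> : [seq i <- enum I | i == x] = [:: x].
  by apply: filter_pred1_uniq; rewrite ?enum_uniq ?mem_enum.
by rewrite big_seq1.
Qed.

End CommutingProducts.

Section JucysMurphy.
Variable n : nat.
Local Notation R := (QS n).

Definition gelt (g : 'S_n) : R := gbasis g.
Definition jm (j : 'I_n) : R := JM j.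

Lemma tperm_jm_comm (u v j : 'I_n) : u != j -> v != j -> (u < j)%N = (v < j)%N ->
  GRing.comm (gelt (tperm u v)) (jm j).
Proof.
move=> uj vj uvj; rewrite /GRing.comm /jm /JM mulr_sumr mulr_suml.
under eq_bigr do rewrite /gelt gbasisM.
under [RHS]eq_bigr do rewrite gbasisM conjgC tpermJ (tpermD uj vj).
rewrite (reindex_inj (@perm_inj _ (tperm u v))) /=; apply: eq_bigl => i.
by case: tpermP => [->|->|//]; rewrite uvj.
Qed.

Lemma jm_comm (i j : 'I_n) : GRing.comm (jm i) (jm j).
Proof.
wlog lij : i j / (i < j)%N.
  move=> H; case: (ltngtP i j) => [/H //|/H /commr_sym //|/val_inj ->].
  exact: commr_refl.
rewrite {1}/jm /JM; apply/commr_sym/commr_sum => l lli.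
apply/commr_sym/tperm_jm_comm; rewrite ?lij ?(ltn_trans lli lij) //.
  by rewrite neq_ltn (ltn_trans lli lij).
by rewrite neq_ltn lij.
Qed.

End JucysMurphy.

Section AdjacentTransposition.
Variable n : nat.
Variables a b : 'I_n.
Hypothesis hab : val b = (val a).+1.
Local Notation sigma := (gelt (tperm a b)).
Local Notation L := (@jm n).

Lemma a_neq_b : a != b.
Proof. by rewrite -(inj_eq val_inj) hab neq_ltn ltnSn. Qed.

Lemma sigma_invol : sigma * sigma = 1.
Proof. by rewrite /gelt gbasisM tperm2. Qed.

Lemma sigma_jm_other (i : 'I_n) : i != a -> i != b -> GRing.comm sigma (L i).
Proof.
move=> ia ib; apply: tperm_jm_comm; rewrite 1?eq_sym //.
have hab' : nat_of_ord b = (nat_of_ord a).+1 := hab.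
have ia' : nat_of_ord i != nat_of_ord a by [].
have ib' : nat_of_ord i != nat_of_ord b by [].
by apply/idP/idP => h; lia.
Qed.

(* L_b = sigma L_a sigma + sigma: split off the term (a, b) of L_b. *)
Lemma jm_succ : L b = sigma * L a * sigma + sigma.
Proof.
have hab' : nat_of_ord b = (nat_of_ord a).+1 := hab.
rewrite /jm /JM mulr_sumr mulr_suml (bigD1 a) ?hab' //= addrC.
congr (_ + _); apply: eq_big => l.
  rewrite -(inj_eq val_inj) /=; apply/idP/idP => [/andP[h1 h2]|h]; lia.
rewrite -(inj_eq val_inj) /= => /andP[h1 h2].
rewrite /gelt !gbasisM -mulgA -{1}(tpermV a b) -conjgE tpermJ tpermL.
by rewrite tpermD // -(inj_eq val_inj) /=; lia.
Qed.

Lemma sigma_jm_a : sigma * L a = L b * sigma - 1.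
Proof. by rewrite jm_succ mulrDl -!mulrA sigma_invol mulr1 addrK. Qed.

Lemma sigma_jm_b : sigma * L b = L a * sigma + 1.
Proof. by rewrite jm_succ mulrDr !mulrA sigma_invol mul1r. Qed.

Lemma sigma_comm_jm_sum : GRing.comm sigma (L a + L b).
Proof.
rewrite /GRing.comm mulrDr mulrDl sigma_jm_a sigma_jm_b.
by rewrite addrC addrACA subrr addr0.
Qed.

Lemma sigma_comm_jm_prod : GRing.comm sigma (L a * L b).
Proof.
rewrite /GRing.comm mulrA sigma_jm_a mulrBl -[L b * sigma * L b]mulrA sigma_jm_b.
by rewrite mulrDr mulr1 mul1r addrK mulrA (jm_comm b a).
Qed.

End AdjacentTransposition.

(* E_s is the product over the entries i of e_(r_s(i))(L_i), where e_g is
   the Lagrange-type polynomial prod_(c <> g) (X - c) / (g - c). *)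
Section IdempotentFactorization.
Variable n : nat.
Local Notation R := (QS n).
Local Notation ev := (peval (@scalar_central n)).

Definition linear_factor (g c : int) : {poly rat} :=
  (((g - c)%:~R)^-1)%:P * ('X - (c%:~R)%:P).

Definition content_poly (g : int) : {poly rat} :=
  \prod_(c <- contents_range n | g != c) linear_factor g c.

Lemma ev_jm_comm i j (f g : {poly rat}) : GRing.comm (ev (jm i) f) (ev (jm j) g).
Proof. by apply/peval_comm/commr_sym/peval_comm/jm_comm. Qed.

Lemma gprodE (l : seq (galg n)) : (gprod l : R) = \prod_(x <- l) (x : R).
Proof. by elim: l => [|x l IH]; rewrite ?big_nil ?big_cons //= IH. Qed.

Lemma linear_factorE (i : 'I_n) (g c : int) :
  gscale ((g - c)%:~R)^-1 (JM i - gscale (c%:~R) (gone n)) = ev (jm i) (linear_factor g c).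
Proof.
rewrite /peval rmorphM !rmorphB /= horner_morphX !horner_morphC.
by rewrite !gscaleE mulr1.
Qed.

(* Regroup the factors of E_s by entry; all of them commute. *)
Lemma JMidemE (s : tab n) :
  (JMidem s : R) = \prod_(i <- enum 'I_n) ev (jm i) (content_poly (content s i)).
Proof.
rewrite /JMidem gprodE big_flatten /= big_map.
under eq_bigr do rewrite big_map big_filter.
under eq_bigr do under eq_bigr do rewrite linear_factorE.
rewrite exchange_prod_comm => [|*]; last exact: ev_jm_comm.
by apply: eq_bigr => i _; rewrite /peval rmorph_prod.
Qed.

End IdempotentFactorization.

Lemma content_tact n (s : tab n) (g : 'S_n) (i : 'I_n) :
  content (tact s g) i = content s ((g^-1)%g i).
Proof. by rewrite /content /trow /tcol ffunE. Qed.

Section PairCommutation.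
Variable n : nat.
Local Notation R := (QS n).
Local Notation ev := (peval (@scalar_central n)).
Variables a b : 'I_n.
Hypothesis hab : val b = (val a).+1.
Local Notation sigma := (tperm a b).

(* The factor e_g(L_a) e_h(L_b) of E_s, for g = r_s(a) and h = r_s(b). *)
Definition pair_part (g h : int) : R :=
  ev (jm a) (content_poly n g) * ev (jm b) (content_poly n h).

Definition outer_part (s : tab n) : R :=
  \prod_(i <- enum 'I_n | (i != a) && (i != b)) ev (jm i) (content_poly n (content s i)).

Lemma JMidem_split (s : tab n) :
  (JMidem s : R) = outer_part s * pair_part (content s a) (content s b).
Proof.
have nab := a_neq_b hab.
set K := fun i => ev (jm i) (content_poly n (content s i)).
have cK i j : GRing.comm (K i) (K j) by apply: ev_jm_comm.
rewrite JMidemE /outer_part /pair_part -/(K a) -/(K b).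
rewrite -(prod_pick K a) -(prod_pick K b) -prod_split_comm => [|i j]; last first.
  by do 2 case: (_ == _); rewrite /GRing.comm ?mul1r ?mulr1 //; apply: cK.
rewrite [\prod_(i <- _ | (i != a) && (i != b)) _]big_mkcond.
rewrite -prod_split_comm => [|i j]; last first.
  case: (_ && _); last by rewrite /GRing.comm mul1r mulr1.
  by apply: commrM; case: (_ == _); rewrite /GRing.comm ?mul1r ?mulr1 //; apply: cK.
apply: eq_bigr => i _.
have [->|ia] := eqVneq i a; first by rewrite (negbTE nab) /= mul1r mulr1.
have [->|ib] := eqVneq i b; first by rewrite /= !mul1r.
by rewrite /= !mulr1.
Qed.

(* s sigma has the same contents as s away from a and b. *)
Lemma outer_part_tact (s : tab n) : outer_part (tact s sigma) = outer_part s.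
Proof.
apply: eq_bigr => i /andP[ia ib].
by rewrite content_tact tpermV tpermD // eq_sym.
Qed.

(* sigma commutes with the L_j for j <> a, b, hence with M_s. *)
Lemma sigma_comm_outer_part (s : tab n) : GRing.comm (gelt sigma) (outer_part s).
Proof.
apply: commr_prod => i /andP[ia ib]; apply: peval_comm.
exact: sigma_jm_other.
Qed.

(* E_s + E_(s sigma) = M_s (e_g(L_a) e_h(L_b) + e_h(L_a) e_g(L_b)). *)
Lemma sigma_comm_pair (s : tab n) :
  GRing.comm (gelt sigma) ((JMidem s : R) + JMidem (tact s sigma)).
Proof.
rewrite !JMidem_split outer_part_tact -mulrDr /pair_part !content_tact tpermV.
rewrite tpermL tpermR; apply: commrM; first exact: sigma_comm_outer_part.
apply: peval_sym_comm; [exact: jm_comm | exact: sigma_comm_jm_sum | exact: sigma_comm_jm_prod].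
Qed.

End PairCommutation.

Lemma tactM n (s : tab n) (g h : 'S_n) : tact (tact s g) h = tact s (g * h).
Proof. by apply/ffunP => i; rewrite !ffunE invMg permM. Qed.

Lemma tact1 n (s : tab n) : tact s 1 = s.
Proof. by apply/ffunP => i; rewrite ffunE invg1 perm1. Qed.

Lemma tableau_tact n (s : tab n) (g : 'S_n) : is_tableau s -> is_tableau (tact s g).
Proof.
move=> /andP[/injectiveP inj /forallP hs]; apply/andP; split.
  by apply/injectiveP => x y; rewrite !ffunE => /inj /perm_inj.
apply/forallP => x; apply/forallP => i; apply/forallP => j; apply/implyP => hij.
have /forallP /(_ i) /forallP /(_ j) /implyP := hs (g^-1 x)%g.
rewrite /trow /tcol ffunE in hij; move=> /(_ hij) /existsP [y /eqP hy].
by apply/existsP; exists (g y); rewrite ffunE permK hy.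
Qed.

Lemma succ_not_congruent (p : nat) (u : int) :
  (1 < p)%N -> (u == u + 1 %[mod p%:Z])%Z = false.
Proof.
by move=> p_gt1; rewrite -[X in (X %% _)%Z == _]addr0 eqz_modDl mod0z modz_small.
Qed.

Section ClassInvolution.
Variable n : nat.
Variables a b : 'I_n.
Hypothesis hab : val b = (val a).+1.
Local Notation sigma := (tperm a b).

Lemma tact_sigma_invol (s : tab n) : tact (tact s sigma) sigma = s.
Proof. by rewrite tactM tperm2 tact1. Qed.

Lemma sigma_order (x y : 'I_n) : (sigma x < sigma y)%N ->
  (x < y)%N || ((nat_of_ord x == b) && (nat_of_ord y == a)).
Proof.
have hab' : nat_of_ord b = (nat_of_ord a).+1 := hab.
have E z : nat_of_ord (sigma z) = if nat_of_ord z == a then nat_of_ord b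
                                  else if nat_of_ord z == b then nat_of_ord a
                                  else nat_of_ord z.
  case: tpermP => [->|->|h1 h2]; rewrite ?eqxx //.
    by rewrite hab' (gtn_eqF (ltnSn _)).
  have zna : (nat_of_ord z == a) = false by apply/eqP => /val_inj.
  have znb : (nat_of_ord z == b) = false by apply/eqP => /val_inj.
  by rewrite zna znb.
rewrite !E; case: (@eqP nat x a); case: (@eqP nat x b); case: (@eqP nat y a);
  case: (@eqP nat y b); move=> *; lia.
Qed.

(* If r_s(a) = r_s(b) mod p, then a and b are not adjacent in s, so s sigma
   is standard along with s. *)
Lemma standard_tact (p : nat) (s : tab n) : prime p -> standard s ->
  (content s a == content s b %[mod p%:Z])%Z -> standard (tact s sigma).
Proof.
move=> pp /andP[ts /forallP hs] cab; apply/andP; split; first exact: tableau_tact.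
have swap (x y : 'I_n) : (nat_of_ord x == b) && (nat_of_ord y == a) ->
    sigma x = a /\ sigma y = b.
  by move=> /andP[/eqP/val_inj -> /eqP/val_inj ->]; rewrite tpermL tpermR.
apply/forallP => x; apply/forallP => y.
have /forallP /(_ (sigma y)) /andP[h1 h2] := hs (sigma x).
rewrite /trow /tcol !ffunE tpermV; rewrite /trow /tcol in h1 h2.
apply/andP; split; apply/implyP => hc.
- have /orP [//|/swap [ex ey]] := sigma_order (implyP h1 hc).
  move: hc; rewrite ex ey => /andP [/eqP r1 /eqP c1].
  have e : content s b = content s a + 1 by rewrite /content /trow /tcol r1 c1; lia.
  by move: cab; rewrite e succ_not_congruent ?prime_gt1.
- have /orP [//|/swap [ex ey]] := sigma_order (implyP h2 hc).
  move: hc; rewrite ex ey => /andP [/eqP c1 /eqP r1].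
  have e : content s a = content s b + 1 by rewrite /content /trow /tcol r1 c1; lia.
  by move: cab; rewrite e eq_sym succ_not_congruent ?prime_gt1.
Qed.

(* s sigma has the contents of s with those at a and b swapped. *)
Lemma psim_tact (p : nat) (s t : tab n) :
  (content t a == content t b %[mod p%:Z])%Z -> psim p s t -> psim p (tact s sigma) t.
Proof.
move=> ct /forallP hs; apply/forallP => x.
rewrite content_tact tpermV (eqP (hs (sigma x))).
by case: tpermP => [->|->|//]; rewrite ?(eqP ct) // eq_sym.
Qed.

Lemma tclass_tact (p : nat) (t s : tab n) : prime p ->
  (content t a == content t b %[mod p%:Z])%Z ->
  standard (tact s sigma) && psim p (tact s sigma) t = standard s && psim p s t.
Proof.
move=> pp ct; have fwd (u : tab n) : standard u && psim p u t ->
    standard (tact u sigma) && psim p (tact u sigma) t.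
  move=> /andP[su /[dup] pu /forallP hpu]; rewrite psim_tact // andbT.
  by apply: (standard_tact pp su); rewrite (eqP (hpu a)) (eqP (hpu b)).
by apply/idP/idP => [/fwd|/fwd //]; rewrite tact_sigma_invol.
Qed.

(* Reindexing E_T = sum_(s in T) E_s along the involution s |-> s sigma. *)
Lemma JMclass_tact_sum (p : nat) (t : tab n) : prime p ->
  (content t a == content t b %[mod p%:Z])%Z ->
  (JMclass p t : QS n) = \sum_(s | standard s && psim p s t) (JMidem (tact s sigma) : QS n).
Proof.
pose act s : tab n := tact s sigma.
move=> pp ct; rewrite /JMclass [LHS](reindex_inj (@can_inj _ _ act act tact_sigma_invol)).
by apply: eq_bigl => s; rewrite tclass_tact.
Qed.

End ClassInvolution.

Theorem mainTheorem1 (p n : nat) (t : tab n) (a b : 'I_n) :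
  prime p ->
  standard t ->
  val b = (val a).+1 ->
  standard (tact t (tperm a b)) ->
  (content t a == content t b %[mod p%:Z])%Z ->
  gmul (gbasis (tperm a b)) (JMclass p t) = gmul (JMclass p t) (gbasis (tperm a b)).
Proof.
move=> pp _ hab _ ct.
change (gelt (tperm a b) * (JMclass p t : QS n) = (JMclass p t : QS n) * gelt (tperm a b)).
have sigma_comm_2ET : GRing.comm (gelt (tperm a b)) ((JMclass p t : QS n) *+ 2).
  rewrite mulr2n {2}(JMclass_tact_sum hab pp ct) /JMclass -big_split /=.
  by apply: commr_sum => s _; apply: sigma_comm_pair.
by apply: mulr2n_inj; rewrite -mulrnAr -mulrnAl.
Qed.
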